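(* In the commutative toric non-degenerate setting described in the context, the automorphism group of $\bar\Gamma$ lifts via the gauging action to automorphisms of the torus: for every automorphism $\phi$ of $\bar\Gamma$ there is a unique $*$-automorphism $\psi_\phi$ of $C(T^n)$ with $\psi_\phi(wt(f))=wt'_\phi(\phi(f))$ for all oriented edges $f$; it is of the form $\psi_\phi(F)=F\circ h_\phi$ for a homeomorphism $h_\phi$ of $T^n$, and $\phi\mapsto\psi_\phi$ is a group homomorphism from $\mathrm{Aut}(\bar\Gamma)$ to the group of $*$-automorphisms of $C(T^n)$. Moreover, if $t\in T^n$ satisfies $h_\phi(t)=t$, then the re-gauging is an enhanced symmetry of the corresponding Hamiltonian: the matrix $M_\phi(t)$ commutes with $H_{\boldsymbol\tau}(t)$.
   Context: $\bar\Gamma$ is a finite connected graph (multiple edges and loops allowed) with $k$ vertices and $n=|E(\bar\Gamma)|-k+1$ independent cycles; $\bar f$ is the reverse of an oriented edge $f$. An automorphism of $\bar\Gamma$ is a pair of bijections of vertices and edges preserving incidence; it acts on oriented edges. Fix an ordered rooted spanning tree $\boldsymbol\tau=(\tau,r,<)$: a spanning tree $\tau$, root $r$, and vertex order $u_1<\dots<u_k$ with $u_1=r$. For a spanning tree $\sigma$ and vertices $x,y$, $\sigma[x\to y]$ is the unique non-backtracking path in $\sigma$ from $x$ to $y$. Let $T^n=(S^1)^n$ with coordinate functions $z_1,\dots,z_n\in C(T^n)$. Choose an orientation $e_1,\dots,e_n$ of the edges not in $\tau$ and define $wt$ on oriented edges by $wt(f)=1$ if $f$ lies in $\tau$, $wt(e_j)=z_j$,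 $wt(\bar e_j)=\bar z_j$. For a walk $\gamma$ through $f_1,\dots,f_m$, $wt(\gamma)=\prod_j wt(f_j)$. The matrix Hamiltonian $H_{\boldsymbol\tau}\in M_k(C(T^n))$ has entries $(H_{\boldsymbol\tau})_{ij}=\sum_{f\text{ from }u_j\text{ to }u_i}wt(f)$; $H_{\boldsymbol\tau}(t)\in M_k(\mathbb C)$ is its evaluation at $t\in T^n$. For an automorphism $\phi$ let $\tau'=\phi(\tau)$ with root $r'=\phi(r)$ and pushed-forward order $u'_i=\phi(u_i)$. The re-gauged weight is $wt'_\phi(f):=wt(\tau'[r'\to x],\,f,\,\tau'[y\to r'])$ for $f$ from $x$ to $y$. The re-gauging matrix $M_\phi\in M_k(C(T^n))$ is defined by $M_\phi e_i=\overline{c_i}\,e_{s(i)}$, where $s(i)$ is the index with $\phi(u_{s(i)})=u_i$ and $c_i=wt(\tau[r\to r'],\,\tau'[r'\to u_i],\,\tau[u_i\to r])$; $M_\phi(t)$ is its evaluation at $t$. *)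

(* Graphs are given in the "dart" model: a finite type V of
   vertices, a finite type D of oriented edges (darts), a source map
   src : D -> V and an orientation-reversal rev : D -> D (fixed-point free
   involution); the unoriented edges are the pairs {d, rev d}.  Loops and
   multiple edges are allowed. *)
From HB Require Import structures.
From mathcomp Require Import all_boot all_order all_algebra.
From mathcomp Require Import complex reals.
From Stdlib Require Import ClassicalEpsilon.
Set Implicit Arguments.
Unset Strict Implicit.
Unset Printing Implicit Defensive.
Import Order.TTheory GRing.Theory Num.Theory.
Local Open Scope ring_scope.

Section Graph.
Variables (V D : finType) (src : D -> V) (rev : D -> D).

Definition tgt (d : D) : V := src (rev d).

Definition is_graph : Prop := involutive rev /\ forall d, rev d != d.

Fixpoint is_walk (x y : V) (p : seq D) : bool :=
  match p with
  | [::] => x == y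
  | d :: p' => (src d == x) && is_walk (tgt d) y p'
  end.

Fixpoint nonbacktracking (p : seq D) : bool :=
  match p with
  | d1 :: ((d2 :: _) as p') => (d2 != rev d1) && nonbacktracking p'
  | _ => true
  end.

Definition connected_in (S : {set D}) : Prop :=
  forall x y : V, exists p : seq D, is_walk x y p && all (mem S) p.

Definition graph_connected : Prop := connected_in [set: D].

(* spanning tree: a set of (unoriented) edges, i.e. a rev-closed dart set,
   whose subgraph is connected, spanning, and acyclic (no cycle = no nonempty
   closed non-backtracking walk, which also excludes loops and multi-edges) *)
Definition spanning_tree (tau : {set D}) : Prop :=
  [/\ forall d, (rev d \in tau) = (d \in tau),
      connected_in tau &
      forall (x : V) (p : seq D), p != [::] -> all (mem tau) p ->
        is_walk x x p -> ~~ nonbacktracking p].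

Definition tree_path (sigma : {set D}) (x y : V) : seq D :=
  epsilon (inhabits [::])
    (fun p => is_walk x y p && all (mem sigma) p && nonbacktracking p).

Definition is_aut (fV : V -> V) (fD : D -> D) : Prop :=
  [/\ bijective fV, bijective fD,
      forall d, src (fD d) = fV (src d) &
      forall d, fD (rev d) = rev (fD d)].

Variable R : realType.
Local Notation C := R[i].

Definition orientation (tau : {set D}) (n : nat) (e : 'I_n -> D) : Prop :=
  [/\ injective e,
      forall j, e j \notin tau,
      forall j l, e j != rev (e l) &
      forall d, d \notin tau -> exists j, d = e j \/ d = rev (e j)].

Variables (tau : {set D}) (n : nat) (e : 'I_n -> D).

Definition wt (d : D) (t : {ffun 'I_n -> C}) : C :=
  if d \in tau then 1 else
  match [pick j | e j == d] with
  | Some j => t j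
  | None => match [pick j | rev (e j) == d] with
            | Some j => (t j)^*
            | None => 1
            end
  end.

Definition wt_walk (p : seq D) (t : {ffun 'I_n -> C}) : C :=
  \prod_(d <- p) wt d t.

Definition wt' (r : V) (fV : V -> V) (fD : D -> D) (f : D)
    (t : {ffun 'I_n -> C}) : C :=
  wt_walk (tree_path (fD @: tau) (fV r) (src f) ++ f
             :: tree_path (fD @: tau) (tgt f) (fV r)) t.

Variables (u : 'I_#|V| -> V).

Definition Ham (t : {ffun 'I_n -> C}) : 'M[C]_#|V| :=
  \matrix_(i, j) \sum_(d | (src d == u j) && (tgt d == u i)) wt d t.

Definition regauge_c (r : V) (fV : V -> V) (fD : D -> D) (i : 'I_#|V|)
    (t : {ffun 'I_n -> C}) : C :=
  wt_walk (tree_path tau r (fV r) ++ tree_path (fD @: tau) (fV r) (u i)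
             ++ tree_path tau (u i) r) t.

Definition Mphi (r : V) (fV : V -> V) (fD : D -> D) (t : {ffun 'I_n -> C})
    : 'M[C]_#|V| :=
  \matrix_(a, b) if fV (u a) == u b then (regauge_c r fV fD b t)^* else 0.

End Graph.

Section Torus.
Variables (R : realType) (n : nat).
Local Notation C := R[i].

Definition torus := {t : {ffun 'I_n -> C} | [forall j, `|t j| == 1]}.

Definition cont (F : torus -> C) : Prop :=
  forall (t : torus) (eps : R), 0 < eps ->
  exists2 delta : R, 0 < delta &
    forall s : torus, (forall j, `|val s j - val t j| < real_complex R delta) ->
      `|F s - F t| < real_complex R eps.

Definition CT := {F : torus -> C | cont F}.

Definition homeomorphism (h : torus -> torus) : Prop :=
  exists g : torus -> torus,
    [/\ cancel h g, cancel g h,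
        forall j, cont (fun t => val (h t) j) &
        forall j, cont (fun t => val (g t) j)].

(* *-automorphism of C(T^n): bijective, unital, C-linear, multiplicative,
   and *-preserving (operations expressed pointwise on representatives) *)
Definition star_aut (psi : CT -> CT) : Prop :=
  bijective psi /\
  (forall F : CT, (forall t, sval F t = 1) -> forall t, sval (psi F) t = 1) /\
  [/\
      forall F G H : CT, (forall t, sval H t = sval F t + sval G t) ->
        forall t, sval (psi H) t = sval (psi F) t + sval (psi G) t,
      forall (a : C) (F G : CT), (forall t, sval G t = a * sval F t) ->
        forall t, sval (psi G) t = a * sval (psi F) t,
      forall F G H : CT, (forall t, sval H t = sval F t * sval G t) ->
        forall t, sval (psi H) t = sval (psi F) t * sval (psi G) t &
      forall F G : CT, (forall t, sval G t = (sval F t)^*) ->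
        forall t, sval (psi G) t = (sval (psi F) t)^*].

End Torus.

From Pilot Require Import Defs.
From HB Require Import structures.
From mathcomp Require Import all_boot all_order all_algebra.
From mathcomp Require Import complex reals.
From mathcomp Require Import ring lra.
From Stdlib Require Import FunctionalExtensionality ProofIrrelevance Classical.
Import Order.TTheory GRing.Theory Num.Theory ComplexField.Normc.
Local Open Scope ring_scope.
Set Implicit Arguments.
Unset Strict Implicit.
Unset Printing Implicit Defensive.

(* Relative to the spanning tree, the edge weights form a flat gauge field
   on the torus: every closed walk inside a spanning tree has weight 1, so the
   weight of a tree path depends only on its endpoints.  Hence the re-gauged
   weights wt'_phi are multiplicative along walks, and the point
   h_phi(t) := (wt'_phi(phi e_j)(t))_j of T^n satisfies
   wt(f)(h_phi t) = wt'_phi(phi f)(t) for every dart f; psi_phi(F) := F o h_phi.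
   Gauge factors telescope, so h_(phi o gamma) = h_gamma o h_phi and h_id = id,
   making h_phi a homeomorphism (its coordinates are Lipschitz) and
   phi |-> psi_phi a homomorphism.  A *-automorphism chi is determined by the
   images of the coordinates z_j: if chi(z_j) = z_j o h, then chi(F) = F o h,
   since otherwise an everywhere non-zero, hence invertible, function would
   be mapped to one with a zero.  At a fixed point of h_phi, relabelling the
   darts by phi turns H(t) M_phi(t) into M_phi(t) H(t). *)

Section ComplexModulus.
Variable R : rcfType.
Local Notation C := R[i].
Implicit Types x y : C.

Lemma norm_normc x : `|x| = real_complex R (normc x).
Proof. by []. Qed.

Lemma ltc_normc x d : (`|x| < real_complex R d) = (normc x < d).
Proof. by rewrite norm_normc ltcR. Qed.

Lemma normc_ge0 x : 0 <= normc x.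
Proof. by have := normr_ge0 x; rewrite norm_normc -(rmorph0 (real_complex R)) lecR. Qed.

Lemma normc_gt0 x : x != 0 -> 0 < normc x.
Proof.
move=> x0; rewrite lt_def normc_ge0 andbT.
by apply: contra x0 => /eqP/eq0_normc ->.
Qed.

Lemma ler_normcD x y : normc (x + y) <= normc x + normc y.
Proof. by have := ler_normD x y; rewrite !norm_normc -rmorphD lecR. Qed.

Lemma normc_conj x : normc x^* = normc x.
Proof. by apply: complexI; rewrite -!norm_normc norm_conjC. Qed.

Lemma normc_distC x y : normc (x - y) = normc (y - x).
Proof. by apply: complexI; rewrite -!norm_normc distrC. Qed.

Lemma normc_eq1 x : `|x| = 1 -> normc x = 1.
Proof. by rewrite norm_normc -(rmorph1 (real_complex R)) => /complexI. Qed.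

End ComplexModulus.

(* The predicate [cont], for points of any type with coordinates [pt], and
   with the real-valued modulus so that the estimates go through [lra]. *)
Section CoordContinuity.
Variables (R : rcfType) (n : nat) (T : Type) (pt : T -> 'I_n -> R[i]).
Local Notation C := R[i].

Definition coord_cont (F : T -> C) := forall (t : T) (eps : R), 0 < eps ->
  exists2 delta : R, 0 < delta &
    forall s : T, (forall j, normc (pt s j - pt t j) < delta) ->
      normc (F s - F t) < eps.

Lemma coord_cont_cst a : coord_cont (fun _ => a).
Proof. by move=> t eps eps_gt0; exists 1 => // s _; rewrite subrr normc0. Qed.

Lemma coord_cont_coord j : coord_cont (fun s => pt s j).
Proof. by move=> t eps eps_gt0; exists eps. Qed.

Lemma coord_cont_add F G :
  coord_cont F -> coord_cont G -> coord_cont (fun s => F s + G s).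
Proof.
move=> contF contG t eps eps_gt0; have eps2_gt0 : 0 < eps / 2 by rewrite divr_gt0.
have [d1 d1_gt0 HF] := contF t _ eps2_gt0; have [d2 d2_gt0 HG] := contG t _ eps2_gt0.
exists (Num.min d1 d2) => [|s Hs]; first by rewrite lt_min d1_gt0 d2_gt0.
have /HF dF : forall j, normc (pt s j - pt t j) < d1.
  by move=> j; have := Hs j; rewrite lt_min => /andP[].
have /HG dG : forall j, normc (pt s j - pt t j) < d2.
  by move=> j; have := Hs j; rewrite lt_min => /andP[].
rewrite opprD addrACA; apply: le_lt_trans (ler_normcD _ _) _; lra.
Qed.

Lemma coord_cont_conj F : coord_cont F -> coord_cont (fun s => (F s)^*).
Proof.
move=> contF t eps eps_gt0; have [d d_gt0 HF] := contF t _ eps_gt0.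
by exists d => // s /HF; rewrite -rmorphB normc_conj.
Qed.

Lemma coord_cont_mul F G :
  coord_cont F -> coord_cont G -> coord_cont (fun s => F s * G s).
Proof.
move=> contF contG t eps eps_gt0.
set A := normc (F t); set B := normc (G t).
have A_ge0 : 0 <= A by apply: normc_ge0.
have B_ge0 : 0 <= B by apply: normc_ge0.
pose eF := Num.min 1 (eps / (2 * (B + 1))); pose eG := eps / (2 * (A + 1)).
have eF_gt0 : 0 < eF by rewrite lt_min ltr01 divr_gt0 // mulr_gt0 //; lra.
have eG_gt0 : 0 < eG by rewrite divr_gt0 // mulr_gt0 //; lra.
have [d1 d1_gt0 HF] := contF t _ eF_gt0; have [d2 d2_gt0 HG] := contG t _ eG_gt0.
exists (Num.min d1 d2) => [|s Hs]; first by rewrite lt_min d1_gt0 d2_gt0.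
have /HF : forall j, normc (pt s j - pt t j) < d1.
  by move=> j; have := Hs j; rewrite lt_min => /andP[].
rewrite lt_min => /andP[dF1 dFB].
have /HG dGA : forall j, normc (pt s j - pt t j) < d2.
  by move=> j; have := Hs j; rewrite lt_min => /andP[].
have -> : F s * G s - F t * G t = F s * (G s - G t) + G t * (F s - F t) by ring.
apply: le_lt_trans (ler_normcD _ _) _; rewrite !normcM -/B.
set dF := normc (F s - F t) in dF1 dFB *; set dG := normc (G s - G t) in dGA *.
have dF_ge0 : 0 <= dF by apply: normc_ge0.
have Fs_le : normc (F s) <= A + 1.
  have -> : F s = F t + (F s - F t) by ring.
  by apply: le_trans (ler_normcD _ _) _; rewrite -/A -/dF; lra.
have EA : (A + 1) * eG = eps / 2 by rewrite /eG; field; lra.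
have EB : (B + 1) * (eps / (2 * (B + 1))) = eps / 2 by field; lra.
have P1 : normc (F s) * dG <= (A + 1) * eG.
  by apply: ler_pM; [exact: normc_ge0 | exact: normc_ge0 | done | exact: ltW].
have P2 : B * dF <= B * (eps / (2 * (B + 1))) by apply: ler_wpM2l => //; exact: ltW.
have P3 : B * (eps / (2 * (B + 1))) < (B + 1) * (eps / (2 * (B + 1))).
  by rewrite ltr_pM2r ?divr_gt0 ?mulr_gt0 //; lra.
lra.
Qed.

Lemma coord_cont_inv F :
  coord_cont F -> (forall s, F s != 0) -> coord_cont (fun s => (F s)^-1).
Proof.
move=> contF F_neq0 t eps eps_gt0; set c := normc (F t).
have c_gt0 : 0 < c by apply: normc_gt0.
have m_gt0 : 0 < Num.min (c / 2) (eps * c * c / 2).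
  by rewrite lt_min !divr_gt0 // !mulr_gt0.
have [d d_gt0 HF] := contF t _ m_gt0; exists d => // s /HF.
rewrite lt_min => /andP[dc deps]; set x := normc (F s - F t) in dc deps.
have Fs_gt : c / 2 < normc (F s).
  have : c <= normc (F s) + x.
    rewrite /c {1}(_ : F t = F s + (F t - F s)); last by ring.
    by apply: le_trans (ler_normcD _ _) _; rewrite normc_distC.
  lra.
have -> : (F s)^-1 - (F t)^-1 = (F t - F s) / (F s * F t).
  by field; rewrite !F_neq0.
rewrite normcM normcV normcM normc_distC -/x -/c ltr_pdivrMr ?mulr_gt0 //; last lra.
have Fs_lt : eps * c * (c / 2) < eps * c * normc (F s) by rewrite ltr_pM2l ?mulr_gt0.
have -> : eps * (normc (F s) * c) = eps * c * normc (F s) by ring.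
by apply: lt_trans Fs_lt; rewrite mulrA.
Qed.

End CoordContinuity.

Section Walks.
Variables (V D : finType) (src : D -> V) (rv : D -> D).
Hypothesis rvK : involutive rv.
Local Notation tgt := (tgt src rv).
Local Notation is_walk := (is_walk src rv).
Local Notation nonbacktracking := (nonbacktracking rv).
Local Notation tree_path := (tree_path src rv).

Lemma tgt_rev d : tgt (rv d) = src d.
Proof. by rewrite /Defs.tgt rvK. Qed.

Lemma is_walk_cat x y p q :
  is_walk x y (p ++ q) =
  is_walk x (last x (map tgt p)) p && is_walk (last x (map tgt p)) y q.
Proof. by elim: p x => [|d p IH] x /=; rewrite ?eqxx // IH andbA. Qed.

Lemma cat_is_walk x y z p q : is_walk x y p -> is_walk y z q -> is_walk x z (p ++ q).
Proof.
elim: p x => [|d p IH] x /=; first by move/eqP ->.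
by case/andP=> -> /IH walk_p /walk_p ->.
Qed.

Lemma backtrackingP p : ~~ nonbacktracking p -> exists p1 d p2, p = p1 ++ [:: d, rv d & p2].
Proof.
elim: p => [|d1 [|d2 p] IH] //=; case/nandP => [/negPn/eqP ->|/IH[p1 [d [p2 ->]]]].
  by exists [::], d1, p.
by exists (d1 :: p1), d, p2.
Qed.

Lemma is_walk_cancel x y p1 d p2 :
  is_walk x y (p1 ++ [:: d, rv d & p2]) -> is_walk x y (p1 ++ p2).
Proof.
rewrite !is_walk_cat => /andP[-> /=] /and3P[/eqP src_d _].
by rewrite tgt_rev src_d.
Qed.

Lemma nonbacktracking_walk_exists (S : {set D}) x y p :
  is_walk x y p -> all (mem S) p ->
  exists q, is_walk x y q && all (mem S) q && nonbacktracking q.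
Proof.
have [k] := ubnP (size p); elim: k p => // k IH p /ltnSE size_p walk_p S_p.
have [nb_p|/backtrackingP[p1 [d [p2 def_p]]]] := boolP (nonbacktracking p).
  by exists p; rewrite walk_p S_p.
move: walk_p S_p; rewrite def_p => /is_walk_cancel walk_p S_p.
apply: IH walk_p _; first by move: size_p; rewrite def_p !size_cat /= !addnS => /ltnW.
by move: S_p; rewrite !all_cat /= => /andP[-> /and3P[]].
Qed.

Lemma tree_path_spec (S : {set D}) x y : connected_in src rv S ->
  is_walk x y (tree_path S x y) && all (mem S) (tree_path S x y).
Proof.
move=> /(_ x y)[p /andP[walk_p S_p]].
have [q q_spec] := nonbacktracking_walk_exists walk_p S_p.
by case/andP: (ClassicalEpsilon.epsilon_spec (inhabits [::])
  (fun p => is_walk x y p && all (mem S) p && nonbacktracking p) (ex_intro _ q q_spec)).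
Qed.

Lemma nonbacktracking_map (f : D -> D) p : injective f ->
  (forall d, f (rv d) = rv (f d)) -> nonbacktracking (map f p) = nonbacktracking p.
Proof.
move=> f_inj f_rev; elim: p => [|d1 [|d2 p] IH] //=.
by rewrite -f_rev (inj_eq f_inj); congr (_ && _); exact: IH.
Qed.

Definition rev_walk (p : seq D) := rev (map rv p).

Lemma rev_walk_is_walk x y p : is_walk x y p -> is_walk y x (rev_walk p).
Proof.
elim: p x => [|d p IH] x /=; first by move/eqP ->; rewrite /rev_walk /= eqxx.
case/andP=> /eqP src_d /IH walk_p; rewrite /rev_walk map_cons rev_cons -cats1.
by apply: cat_is_walk walk_p _; rewrite /= eqxx tgt_rev src_d eqxx.
Qed.

Lemma all_rev_walk (S : {set D}) p : (forall d, (rv d \in S) = (d \in S)) ->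
  all (mem S) p -> all (mem S) (rev_walk p).
Proof.
move=> S_rev S_p; rewrite /rev_walk all_rev all_map.
by apply/allP => d d_p /=; rewrite S_rev; exact: (allP S_p).
Qed.

Section SpanningTree.
Variable S : {set D}.
Hypothesis S_tree : spanning_tree src rv S.

Lemma tree_path_is_walk x y : is_walk x y (tree_path S x y).
Proof. by case: S_tree => _ S_conn _; case/andP: (tree_path_spec x y S_conn). Qed.

Lemma tree_path_sub x y : all (mem S) (tree_path S x y).
Proof. by case: S_tree => _ S_conn _; case/andP: (tree_path_spec x y S_conn). Qed.

Lemma rev_tree_path_sub x y : all (mem S) (rev_walk (tree_path S x y)).
Proof. by case: S_tree => S_rev _ _; apply/all_rev_walk/tree_path_sub. Qed.

End SpanningTree.

Section Automorphism.
Variables (fV : V -> V) (fD : D -> D).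
Hypothesis fA : is_aut src rv fV fD.

Lemma aut_src d : src (fD d) = fV (src d).
Proof. by case: fA. Qed.

Lemma aut_rev d : fD (rv d) = rv (fD d).
Proof. by case: fA. Qed.

Lemma aut_tgt d : tgt (fD d) = fV (tgt d).
Proof. by rewrite /Defs.tgt -aut_rev aut_src. Qed.

Lemma aut_is_walk x y p : is_walk x y p -> is_walk (fV x) (fV y) (map fD p).
Proof.
elim: p x => [|d p IH] x /=; first by move/eqP ->.
by case/andP=> /eqP <- /IH; rewrite aut_src eqxx aut_tgt.
Qed.

Lemma aut_inverse : exists gV gD, [/\ is_aut src rv gV gD,
  cancel fV gV, cancel gV fV, cancel fD gD & cancel gD fD].
Proof.
case: fA => [[gV fVK gVK] [gD fDK gDK] f_src f_rev].
exists gV, gD; split=> //; split; [by exists fV | by exists fD | move=> d | move=> d].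
  by apply: (can_inj fVK); rewrite -f_src !gDK gVK.
by apply: (can_inj fDK); rewrite f_rev !gDK.
Qed.

Lemma aut_comp gV gD : is_aut src rv gV gD -> is_aut src rv (fV \o gV) (fD \o gD).
Proof.
case: fA => [fV_bij fD_bij f_src f_rev] [gV_bij gD_bij g_src g_rev].
split; [exact: bij_comp | exact: bij_comp | move=> d /= | move=> d /=].
  by rewrite f_src g_src.
by rewrite g_rev f_rev.
Qed.

End Automorphism.

Lemma mem_imset_can (A : {set D}) (f g : D -> D) d : cancel f g -> cancel g f ->
  (d \in f @: A) = (g d \in A).
Proof.
move=> fK gK; apply/imsetP/idP => [[d0 A_d0 ->]|A_gd]; first by rewrite fK.
by exists (g d); rewrite ?gK.
Qed.

Lemma aut_spanning_tree fV fD S : is_aut src rv fV fD ->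
  spanning_tree src rv S -> spanning_tree src rv (fD @: S).
Proof.
move=> fA [S_rev S_conn S_acyclic].
have [gV [gD [gA fVK gVK fDK gDK]]] := aut_inverse fA.
have memS d : (d \in fD @: S) = (gD d \in S) by apply: mem_imset_can.
split=> [d | x y | x p p_nil S_p walk_p].
- by rewrite !memS; case: gA => _ _ _ ->; rewrite S_rev.
- have [p /andP[walk_p S_p]] := S_conn (gV x) (gV y).
  exists (map fD p); rewrite -{1}[x]gVK -{1}[y]gVK (aut_is_walk fA) //= all_map.
  by apply/allP => d d_p /=; rewrite memS fDK; exact: (allP S_p).
- case: gA (gA) => _ _ _ g_rev gA.
  rewrite -(nonbacktracking_map p (can_inj gDK) g_rev).
  apply: (S_acyclic (gV x)); first by case: p p_nil {S_p walk_p}.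
    by rewrite all_map; apply/allP => d d_p /=; rewrite -memS; exact: (allP S_p).
  exact: (aut_is_walk gA) walk_p.
Qed.

End Walks.

Definition unimodular (R : rcfType) n (t : {ffun 'I_n -> R[i]}) := forall j, `|t j| = 1.

Lemma mulC_conj_norm1 (R : rcfType) (x : R[i]) : `|x| = 1 -> x * x^* = 1.
Proof. by move=> x1; rewrite -normCK x1 expr1n. Qed.

Section Weights.
Variables (R : realType) (V D : finType) (src : D -> V) (rv : D -> D).
Hypothesis rvK : involutive rv.
Variables (tau : {set D}) (n : nat) (e : 'I_n -> D).
Hypothesis tau_tree : spanning_tree src rv tau.
Hypothesis e_orient : orientation rv tau e.
Local Notation C := R[i].
Local Notation wt := (wt rv tau e).
Local Notation wt_walk := (wt_walk rv tau e).
Local Notation is_walk := (is_walk src rv).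
Local Notation tgt := (tgt src rv).
Local Notation tree_path := (tree_path src rv).
Implicit Types t : {ffun 'I_n -> C}.

Lemma wt_tree d t : d \in tau -> wt d t = 1.
Proof. by rewrite /Defs.wt => ->. Qed.

Lemma wt_edge j t : wt (e j) t = t j.
Proof.
case: e_orient => e_inj e_tau _ _; rewrite /Defs.wt (negbTE (e_tau j)).
by case: pickP => [j' /eqP/e_inj -> //|/(_ j)]; rewrite eqxx.
Qed.

Lemma wt_rev_edge j t : wt (rv (e j)) t = (t j)^*.
Proof.
case: e_orient => e_inj e_tau e_rev _; case: tau_tree => tau_rev _ _.
rewrite /Defs.wt tau_rev (negbTE (e_tau j)).
case: pickP => [j' /eqP e_j'|_]; first by move: (e_rev j' j); rewrite e_j' eqxx.
by case: pickP => [j' /eqP/(inv_inj rvK)/e_inj -> //|/(_ j)]; rewrite eqxx.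
Qed.

Lemma wt_rev d t : wt (rv d) t = (wt d t)^*.
Proof.
case: tau_tree => tau_rev _ _.
have [tau_d|tau'd] := boolP (d \in tau).
  by rewrite !wt_tree ?tau_rev // conjC1.
case: e_orient => _ _ _ /(_ d tau'd)[j [->|->]].
  by rewrite wt_rev_edge wt_edge.
by rewrite rvK wt_edge wt_rev_edge conjCK.
Qed.

Lemma norm_wt d t : unimodular t -> `|wt d t| = 1.
Proof.
move=> t1; rewrite /Defs.wt; case: (d \in tau); first exact: normr1.
case: pickP => [j _|_]; first exact: t1.
by case: pickP => [j _|_]; rewrite ?norm_conjC ?t1 ?normr1.
Qed.

Lemma wt_walk_nil t : wt_walk [::] t = 1.
Proof. by rewrite /Defs.wt_walk big_nil. Qed.

Lemma wt_walk_cons d p t : wt_walk (d :: p) t = wt d t * wt_walk p t.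
Proof. by rewrite /Defs.wt_walk big_cons. Qed.

Lemma wt_walk_cat p q t : wt_walk (p ++ q) t = wt_walk p t * wt_walk q t.
Proof. by rewrite /Defs.wt_walk big_cat. Qed.

Lemma norm_wt_walk p t : unimodular t -> `|wt_walk p t| = 1.
Proof.
move=> t1; rewrite /Defs.wt_walk; elim/big_rec: _ => [|d x _ x1]; first exact: normr1.
by rewrite normrM norm_wt // x1 mulr1.
Qed.

Lemma wt_walk_tree p t : all (mem tau) p -> wt_walk p t = 1.
Proof.
by move=> tau_p; rewrite /Defs.wt_walk big_seq big1 // => d /(allP tau_p)/wt_tree.
Qed.

Lemma wt_rev_walk p t : wt_walk (rev_walk rv p) t = (wt_walk p t)^*.
Proof.
rewrite /Defs.wt_walk /rev_walk big_rev big_map rmorph_prod.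
by apply: eq_bigr => d _; rewrite wt_rev.
Qed.

(* A closed walk inside a tree backtracks somewhere, and a backtrack
   [d, rev d] has weight |wt d|^2 = 1. *)
Lemma wt_closed_tree_walk S t x p : spanning_tree src rv S -> unimodular t ->
  is_walk x x p -> all (mem S) p -> wt_walk p t = 1.
Proof.
case=> _ _ S_acyclic t1.
have [k] := ubnP (size p); elim: k p => // k IH p /ltnSE size_p walk_p S_p.
have [->|p_nil] := eqVneq p [::]; first exact: wt_walk_nil.
have [p1 [d [p2 def_p]]] := backtrackingP (S_acyclic x p p_nil S_p walk_p).
move: size_p walk_p S_p; rewrite def_p !size_cat /= !addnS => /ltnW size_p.
move=> /(is_walk_cancel rvK) walk_p; rewrite all_cat /= => /andP[S_p1 /and3P[_ _ S_p2]].
rewrite !wt_walk_cat !wt_walk_cons wt_rev [wt d t * _]mulrA mulC_conj_norm1 ?norm_wt // mul1r.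
by rewrite -wt_walk_cat; apply: (IH (p1 ++ p2)); rewrite ?size_cat ?all_cat ?S_p1.
Qed.

Lemma tree_walk_wt_eq S t x y p q : spanning_tree src rv S -> unimodular t ->
  is_walk x y p -> all (mem S) p -> is_walk x y q -> all (mem S) q ->
  wt_walk p t = wt_walk q t.
Proof.
move=> S_tree t1 walk_p S_p walk_q S_q.
have pq1 : wt_walk p t * (wt_walk q t)^* = 1.
  rewrite -wt_rev_walk -wt_walk_cat; apply: (wt_closed_tree_walk S_tree t1 (x := x)).
    exact: cat_is_walk walk_p (rev_walk_is_walk rvK walk_q).
  by rewrite all_cat S_p; case: S_tree => S_rev _ _; apply: all_rev_walk.
have qq1 := mulC_conj_norm1 (norm_wt_walk q t1).
by rewrite -[LHS]mulr1 -qq1 mulrCA pq1 mulr1.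
Qed.

Section TreePaths.
Variable S : {set D}.
Hypothesis S_tree : spanning_tree src rv S.

Lemma wt_tree_path_sym x y t : unimodular t ->
  wt_walk (tree_path S y x) t = (wt_walk (tree_path S x y) t)^*.
Proof.
move=> t1; rewrite -wt_rev_walk; apply: (tree_walk_wt_eq S_tree t1).
- exact: tree_path_is_walk.
- exact: tree_path_sub.
- exact/rev_walk_is_walk/tree_path_is_walk.
- exact: rev_tree_path_sub.
Qed.

Lemma wt_tree_path_inv x y t : unimodular t ->
  wt_walk (tree_path S x y) t * wt_walk (tree_path S y x) t = 1.
Proof. by move=> t1; rewrite (wt_tree_path_sym x y) // mulC_conj_norm1 ?norm_wt_walk. Qed.

End TreePaths.

End Weights.

Section Regauge.
Variables (R : realType) (V D : finType) (src : D -> V) (rv : D -> D).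
Hypothesis rvK : involutive rv.
Variables (tau : {set D}) (n : nat) (e : 'I_n -> D) (r : V).
Hypothesis tau_tree : spanning_tree src rv tau.
Hypothesis e_orient : orientation rv tau e.
Local Notation C := R[i].
Local Notation wt := (wt rv tau e).
Local Notation wt_walk := (wt_walk rv tau e).
Local Notation wt' := (wt' src rv tau e r).
Local Notation is_walk := (is_walk src rv).
Local Notation tgt := (tgt src rv).
Local Notation tree_path := (tree_path src rv).
Implicit Types t : {ffun 'I_n -> C}.

Definition regauge_walk (S : {set D}) (a : V) (f : D) :=
  tree_path S a (src f) ++ f :: tree_path S (tgt f) a.

Lemma regauge_walk_is_walk S a f : spanning_tree src rv S ->
  is_walk a a (regauge_walk S a f).
Proof.
move=> S_tree; apply: cat_is_walk (tree_path_is_walk rvK S_tree a (src f)) _.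
by rewrite /= eqxx (tree_path_is_walk rvK S_tree).
Qed.

Lemma regauge_walk_sub S a f : spanning_tree src rv S -> f \in S ->
  all (mem S) (regauge_walk S a f).
Proof. by move=> S_tree S_f; rewrite all_cat /= !(tree_path_sub rvK S_tree) S_f. Qed.

Lemma wt'E fV fD f t : wt' fV fD f t =
  wt_walk (tree_path (fD @: tau) (fV r) (src f)) t * wt f t *
  wt_walk (tree_path (fD @: tau) (tgt f) (fV r)) t.
Proof. by rewrite /Defs.wt' wt_walk_cat wt_walk_cons mulrA. Qed.

Definition regauge fV fD t : {ffun 'I_n -> C} := [ffun j => wt' fV fD (fD (e j)) t].

Lemma regauge_unimodular fV fD t : unimodular t -> unimodular (regauge fV fD t).
Proof. by move=> t1 j; rewrite ffunE norm_wt_walk. Qed.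

Section Automorphism.
Variables (fV : V -> V) (fD : D -> D).
Hypothesis fA : is_aut src rv fV fD.
Let phi_tree := aut_spanning_tree fA tau_tree.

Lemma wt'_rev f t : unimodular t -> wt' fV fD (rv f) t = (wt' fV fD f t)^*.
Proof.
move=> t1; rewrite !wt'E (tgt_rev _ rvK) (wt_rev rvK tau_tree e_orient).
change (src (rv f)) with (tgt f).
rewrite (wt_tree_path_sym rvK tau_tree e_orient phi_tree (tgt f) (fV r)) //.
rewrite (wt_tree_path_sym rvK tau_tree e_orient phi_tree (fV r) (src f)) // !rmorphM.
ring.
Qed.

Lemma wt'_tree f t : unimodular t -> f \in fD @: tau -> wt' fV fD f t = 1.
Proof.
move=> t1 phi_f; apply: (wt_closed_tree_walk rvK tau_tree e_orient phi_tree t1).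
  exact: regauge_walk_is_walk.
exact: regauge_walk_sub.
Qed.

Lemma wt_regauge d t : unimodular t -> wt d (regauge fV fD t) = wt' fV fD (fD d) t.
Proof.
move=> t1; have [tau_d|tau'd] := boolP (d \in tau).
  by rewrite wt_tree // wt'_tree // imset_f.
case: e_orient => _ _ _ /(_ d tau'd)[j [->|->]].
  by rewrite (wt_edge e_orient) ffunE.
by rewrite (wt_rev_edge rvK tau_tree e_orient) ffunE (aut_rev fA) wt'_rev.
Qed.

Lemma wt_walk_regauge x y p t : unimodular t -> is_walk x y p ->
  wt_walk p (regauge fV fD t) =
  wt_walk (tree_path (fD @: tau) (fV r) (fV x)) t * wt_walk (map fD p) t *
  wt_walk (tree_path (fD @: tau) (fV y) (fV r)) t.
Proof.
move=> t1; elim: p x => [|d p IH] x /=.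
  by move/eqP <-; rewrite !wt_walk_nil mulr1 (wt_tree_path_inv rvK tau_tree).
case/andP=> /eqP src_d /IH wt_p.
rewrite !wt_walk_cons wt_p wt_regauge // wt'E (aut_src fA) (aut_tgt fA) src_d.
rewrite -[RHS]mulr1 -(wt_tree_path_inv rvK tau_tree e_orient phi_tree (fV (tgt d)) (fV r) t1).
ring.
Qed.

End Automorphism.

Lemma all_map_imset_comp (fD gD : D -> D) p : all (mem (gD @: tau)) p ->
  all (mem ((fD \o gD) @: tau)) (map fD p).
Proof.
move=> g_p; rewrite all_map; apply/allP => d /(allP g_p)/imsetP[d0 tau_d0 ->] /=.
by rewrite -[fD (gD d0)]/((fD \o gD) d0) imset_f.
Qed.

(* phi |-> h_phi is contravariant: the re-gauging walks of phi o gamma are,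
   up to a tree-path gauge factor, the images under phi of those of gamma. *)
Lemma regauge_comp fV fD gV gD t : is_aut src rv fV fD -> is_aut src rv gV gD ->
  unimodular t -> regauge (fV \o gV) (fD \o gD) t = regauge gV gD (regauge fV fD t).
Proof.
move=> fA gA t1; apply/ffunP => j; rewrite !ffunE.
have g_tree := aut_spanning_tree gA tau_tree.
have f_tree := aut_spanning_tree fA tau_tree.
have fg_tree := aut_spanning_tree (aut_comp fA gA) tau_tree.
have map_tree_path x y : wt_walk (tree_path ((fD \o gD) @: tau) (fV x) (fV y)) t =
    wt_walk (map fD (tree_path (gD @: tau) x y)) t.
  apply: (tree_walk_wt_eq rvK tau_tree e_orient fg_tree t1).
  - exact: tree_path_is_walk.
  - exact: tree_path_sub.
  - exact/(aut_is_walk fA)/tree_path_is_walk.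
  - exact/all_map_imset_comp/tree_path_sub.
have -> : wt' gV gD (gD (e j)) (regauge fV fD t) =
  wt_walk (regauge_walk (gD @: tau) (gV r) (gD (e j))) (regauge fV fD t) by [].
rewrite (wt_walk_regauge fA t1 (regauge_walk_is_walk _ _ g_tree)).
rewrite wt'E /regauge_walk map_cat map_cons !wt_walk_cat !wt_walk_cons /=.
rewrite (aut_src fA) (aut_tgt fA) !map_tree_path.
rewrite -[LHS]mul1r -(wt_tree_path_inv rvK tau_tree e_orient f_tree (fV r) (fV (gV r)) t1).
ring.
Qed.

Lemma regauge_id fV fD t : (forall v, fV v = v) -> (forall d, fD d = d) ->
  regauge fV fD t = t.
Proof.
move=> fV_id fD_id; apply/ffunP => j; rewrite ffunE wt'E.
have -> : fD @: tau = tau by rewrite (eq_imset _ fD_id) imset_id.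
rewrite fV_id fD_id (wt_edge e_orient).
by rewrite !wt_walk_tree ?mul1r ?mulr1 // (tree_path_sub rvK tau_tree).
Qed.

End Regauge.

Section EnhancedSymmetry.
Variables (R : realType) (V D : finType) (src : D -> V) (rv : D -> D).
Hypothesis rvK : involutive rv.
Variables (tau : {set D}) (n : nat) (e : 'I_n -> D) (r : V).
Hypothesis tau_tree : spanning_tree src rv tau.
Hypothesis e_orient : orientation rv tau e.
Variable u : 'I_#|V| -> V.
Hypothesis u_bij : bijective u.
Local Notation C := R[i].
Local Notation wt_walk := (wt_walk rv tau e).
Local Notation tree_path := (tree_path src rv).
Local Notation Ham := (Ham src rv tau e u).
Local Notation Mphi := (Mphi src rv tau e u r).

Lemma regauge_cE fV fD i (t : {ffun 'I_n -> C}) :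
  regauge_c src rv tau e u r fV fD i t = wt_walk (tree_path (fD @: tau) (fV r) (u i)) t.
Proof.
rewrite /regauge_c !wt_walk_cat !(wt_walk_tree rv e t (tree_path_sub rvK tau_tree _ _)).
by rewrite mul1r mulr1.
Qed.

(* At a fixed point t of h_phi, wt(d)(t) = wt'_phi(phi d)(t): the darts of
   H(t) M and of M H(t) correspond under phi, and the gauge factors c_i cancel. *)
Lemma Mphi_Ham_comm fV fD (t : {ffun 'I_n -> C}) : is_aut src rv fV fD ->
  unimodular t -> regauge src rv tau e r fV fD t = t ->
  Mphi fV fD t *m Ham t = Ham t *m Mphi fV fD t.
Proof.
move=> fA t1 t_fix.
have phi_tree := aut_spanning_tree fA tau_tree.
have [gV [gD [gA fVK gVK fDK gDK]]] := aut_inverse fA.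
have [ui uK uiK] := u_bij.
apply/matrixP => a b; rewrite !mxE.
rewrite (bigD1 (ui (fV (u a)))) //= big1 ?addr0; last first.
  move=> k k_neq; rewrite !mxE ifF ?mul0r //.
  by apply: contraNF k_neq => /eqP ->; rewrite uK.
rewrite [RHS](bigD1 (ui (gV (u b)))) //= big1 ?addr0; last first.
  move=> k k_neq; rewrite !mxE ifF ?mulr0 //.
  by apply: contraNF k_neq => /eqP <-; rewrite fVK uK.
rewrite !mxE !uiK gVK !eqxx (reindex_inj (can_inj fDK)) /=.
rewrite (eq_bigl (fun d => (src d == gV (u b)) && (tgt src rv d == u a))); last first.
  move=> d; rewrite (aut_src fA) (aut_tgt fA) -{1}[u b]gVK.
  by rewrite !(inj_eq (can_inj fVK)).
rewrite mulr_sumr mulr_suml; apply: eq_bigr => d /andP[/eqP src_d /eqP tgt_d].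
have := wt_regauge rvK r tau_tree e_orient fA d t1; rewrite t_fix => ->.
rewrite wt'E (aut_src fA) (aut_tgt fA) src_d tgt_d gVK !regauge_cE uiK.
rewrite -!(wt_tree_path_sym rvK tau_tree e_orient phi_tree) //.
rewrite -[LHS]mulr1 -(wt_tree_path_inv rvK tau_tree e_orient phi_tree (fV r) (u b) t1).
ring.
Qed.

End EnhancedSymmetry.

Section ContinuousFunctions.
Variables (R : realType) (n : nat).
Local Notation C := R[i].
Local Notation T := (torus R n).

Lemma torus_unimodular (t : T) : unimodular (val t).
Proof. by move=> j; apply/eqP; move/forallP: (valP t). Qed.

Lemma cont_coord_cont (F : T -> C) : cont F <-> coord_cont (fun s : T => val s) F.
Proof.
split=> contF t eps eps_gt0; have [d d_gt0 Hd] := contF t eps eps_gt0.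
  by exists d => // s Hs; rewrite -ltc_normc; apply: Hd => j; rewrite ltc_normc.
by exists d => // s Hs; rewrite ltc_normc; apply: Hd => j; rewrite -ltc_normc.
Qed.

Lemma cont_cst a : cont (fun _ : T => a).
Proof. exact/cont_coord_cont/coord_cont_cst. Qed.

Lemma cont_coord j : cont (fun s : T => val s j).
Proof. exact/cont_coord_cont/coord_cont_coord. Qed.

Lemma cont_add (F G : T -> C) : cont F -> cont G -> cont (fun s => F s + G s).
Proof.
by move=> /cont_coord_cont contF /cont_coord_cont contG; apply/cont_coord_cont/coord_cont_add.
Qed.

Lemma cont_mul (F G : T -> C) : cont F -> cont G -> cont (fun s => F s * G s).
Proof.
by move=> /cont_coord_cont contF /cont_coord_cont contG; apply/cont_coord_cont/coord_cont_mul.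
Qed.

Lemma cont_conj (F : T -> C) : cont F -> cont (fun s => (F s)^*).
Proof. by move=> /cont_coord_cont contF; apply/cont_coord_cont/coord_cont_conj. Qed.

Lemma cont_inv (F : T -> C) : cont F -> (forall s, F s != 0) -> cont (fun s => (F s)^-1).
Proof. by move=> /cont_coord_cont contF F_neq0; apply/cont_coord_cont/coord_cont_inv. Qed.

Definition cstCT a : CT R n := exist _ _ (cont_cst a).
Definition coordCT j : CT R n := exist _ _ (cont_coord j).
Definition addCT (F G : CT R n) : CT R n := exist _ _ (cont_add (svalP F) (svalP G)).
Definition mulCT (F G : CT R n) : CT R n := exist _ _ (cont_mul (svalP F) (svalP G)).
Definition conjCT (F : CT R n) : CT R n := exist _ _ (cont_conj (svalP F)).
Definition normCT (F : CT R n) : CT R n := mulCT F (conjCT F).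

Fixpoint sumCT (l : seq (CT R n)) : CT R n :=
  if l is F :: l' then addCT F (sumCT l') else cstCT 0.

Lemma sumCTE l t : sval (sumCT l) t = \sum_(F <- l) sval F t.
Proof. by elim: l => [|F l IH] /=; rewrite ?big_nil ?big_cons ?IH. Qed.

Lemma CT_ext (F G : CT R n) : (forall t, sval F t = sval G t) -> F = G.
Proof.
case: F G => [F contF] [G contG] /= /functional_extensionality FG; subst G.
by rewrite (proof_irrelevance _ contF contG).
Qed.

Section StarAutomorphism.
Variable chi : CT R n -> CT R n.
Hypothesis chi_aut : star_aut chi.

Lemma chi_cst a t : sval (chi (cstCT a)) t = a.
Proof.
case: chi_aut => _ [chi1 [_ chiZ _ _]].
by rewrite (chiZ a (cstCT 1)) ?chi1 ?mulr1 // => s /=; rewrite mulr1.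
Qed.

Lemma chi_add F G t : sval (chi (addCT F G)) t = sval (chi F) t + sval (chi G) t.
Proof. by case: chi_aut => _ [_ [chiD _ _ _]]; apply: chiD. Qed.

Lemma chi_norm F t : sval (chi (normCT F)) t = sval (chi F) t * (sval (chi F) t)^*.
Proof.
case: chi_aut => _ [_ [_ _ chiM chiC]].
by rewrite (chiM F (conjCT F)) // (chiC F (conjCT F)).
Qed.

Lemma chi_sum l t : sval (chi (sumCT l)) t = \sum_(F <- l) sval (chi F) t.
Proof. by elim: l => [|F l IH] /=; rewrite ?big_nil ?big_cons ?chi_cst ?chi_add ?IH. Qed.

(* A function without zeros is invertible in C(T^n), so its image cannot vanish. *)
Lemma chi_eq0_has_root K t : sval (chi K) t = 0 -> exists s, sval K s = 0.
Proof.
move=> chiK0; apply: NNPP => no_root.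
have K_neq0 s : sval K s != 0 by apply/eqP => K0; apply: no_root; exists s.
pose Kinv : CT R n := exist _ _ (cont_inv (svalP K) K_neq0).
case: chi_aut => _ [_ [_ _ chiM _]].
have := chiM K Kinv (cstCT 1) (fun s => esym (mulfV (K_neq0 s))) t.
by rewrite chi_cst chiK0 mul0r; apply/eqP; rewrite oner_eq0.
Qed.

(* With a = (chi F)(t) and b = h(t), chi sends |F - a|^2 + sum_j |z_j - b_j|^2
   to a function vanishing at t; a root s of it must be b, with F(s) = a. *)
Lemma star_aut_eval (h : torus R n -> torus R n) :
  (forall j t, sval (chi (coordCT j)) t = val (h t) j) ->
  forall F t, sval (chi F) t = sval F (h t).
Proof.
move=> chi_coord F t.
set a := sval (chi F) t; set b := val (h t).
pose dist2 G x := normCT (addCT G (cstCT (- x))).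
pose K := addCT (dist2 F a) (sumCT [seq dist2 (coordCT j) (b j) | j <- index_enum 'I_n]).
have norm_ge0 (x : C) : 0 <= x * x^* by rewrite -normCK exprn_ge0.
have norm_eq0 (x y : C) : (x - y) * (x - y)^* = 0 -> x = y.
  by move/eqP; rewrite -normCK sqrf_eq0 normr_eq0 subr_eq0 => /eqP.
have chiK0 : sval (chi K) t = 0.
  rewrite chi_add chi_norm chi_add chi_cst subrr mul0r add0r chi_sum big_map big1 // => j _.
  by rewrite chi_norm chi_add chi_cst chi_coord subrr mul0r.
have [s] := chi_eq0_has_root chiK0.
rewrite /= sumCTE big_map => /eqP.
rewrite paddr_eq0 ?sumr_ge0 //; last by move=> j _; exact: norm_ge0.
case/andP=> /eqP Fs /eqP coord_s.
have -> : h t = s.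
  apply/val_inj/ffunP => j; symmetry; apply: norm_eq0.
  by apply: (psumr_eq0P (fun j _ => norm_ge0 _) coord_s).
exact/esym/norm_eq0.
Qed.

End StarAutomorphism.

End ContinuousFunctions.

Section Lipschitz.
Variables (R : realType) (D : finType) (rv : D -> D) (tau : {set D}).
Variables (n : nat) (e : 'I_n -> D).
Local Notation C := R[i].
Local Notation wt := (wt rv tau e).
Local Notation wt_walk := (wt_walk rv tau e).
Variables (s t : {ffun 'I_n -> C}) (delta : R).
Hypotheses (delta_gt0 : 0 < delta) (st_near : forall j, normc (s j - t j) < delta).

Lemma wt_lipschitz d : normc (wt d s - wt d t) <= delta.
Proof.
rewrite /Defs.wt; case: (d \in tau); first by rewrite subrr normc0 ltW.
case: pickP => [j _|_]; first exact: ltW.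
case: pickP => [j _|_]; last by rewrite subrr normc0 ltW.
by rewrite -rmorphB normc_conj ltW.
Qed.

Lemma wt_walk_lipschitz p : unimodular s -> unimodular t ->
  normc (wt_walk p s - wt_walk p t) <= (size p)%:R * delta.
Proof.
move=> s1 t1; elim: p => [|d p IH]; first by rewrite !wt_walk_nil subrr normc0 mul0r.
have -> : wt_walk (d :: p) s - wt_walk (d :: p) t =
  wt d s * (wt_walk p s - wt_walk p t) + wt_walk p t * (wt d s - wt d t).
  by rewrite !wt_walk_cons; ring.
apply: le_trans (ler_normcD _ _) _.
have wt_d1 : normc (wt d s) = 1 by apply/normc_eq1/norm_wt.
have wt_p1 : normc (wt_walk p t) = 1 by apply/normc_eq1/norm_wt_walk.
rewrite !normcM wt_d1 wt_p1 !mul1r /= -addn1 natrD mulrDl mul1r.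
by have := wt_lipschitz d; lra.
Qed.

End Lipschitz.

Section TorusAction.
Variables (R : realType) (V D : finType) (src : D -> V) (rv : D -> D).
Hypothesis rvK : involutive rv.
Variables (tau : {set D}) (n : nat) (e : 'I_n -> D) (r : V).
Hypothesis tau_tree : spanning_tree src rv tau.
Hypothesis e_orient : orientation rv tau e.
Local Notation C := R[i].
Local Notation T := (torus R n).
Local Notation regauge := (regauge src rv tau e r).

Lemma regauge_torus fV fD (t : T) : [forall j, `|regauge fV fD (val t) j| == 1].
Proof.
by apply/forallP => j; apply/eqP/regauge_unimodular/torus_unimodular.
Qed.

Definition htorus fV fD (t : T) : T := exist _ (regauge fV fD (val t)) (regauge_torus fV fD t).

Lemma htorus_comp fV fD gV gD (t : T) : is_aut src rv fV fD -> is_aut src rv gV gD ->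
  htorus (fV \o gV) (fD \o gD) t = htorus gV gD (htorus fV fD t).
Proof.
move=> fA gA; apply/val_inj.
exact: (regauge_comp rvK r tau_tree e_orient fA gA (torus_unimodular t)).
Qed.

Lemma htorus_inv fV fD : is_aut src rv fV fD ->
  exists gV gD, [/\ is_aut src rv gV gD, cancel (htorus fV fD) (htorus gV gD)
                  & cancel (htorus gV gD) (htorus fV fD)].
Proof.
move=> fA; have [gV [gD [gA fVK gVK fDK gDK]]] := aut_inverse fA.
exists gV, gD; split=> // t; apply/val_inj.
  rewrite -[LHS]/(val (htorus gV gD (htorus fV fD t))) -htorus_comp //.
  by apply: (regauge_id rvK) => // ? /=; rewrite ?fVK ?fDK.
rewrite -[LHS]/(val (htorus fV fD (htorus gV gD t))) -htorus_comp //.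
by apply: (regauge_id rvK) => // ? /=; rewrite ?gVK ?gDK.
Qed.

Lemma htorus_lipschitz fV fD (s t : T) (delta : R) : 0 < delta ->
  (forall j, normc (val s j - val t j) < delta) ->
  forall j, normc (val (htorus fV fD s) j - val (htorus fV fD t) j) <=
    (\sum_(k < n) size (regauge_walk src rv (fD @: tau) (fV r) (fD (e k))))%:R * delta.
Proof.
move=> delta_gt0 st_near j; rewrite /= !ffunE.
apply: le_trans (wt_walk_lipschitz rv tau e delta_gt0 st_near
  (regauge_walk src rv (fD @: tau) (fV r) (fD (e j))) (torus_unimodular s) (torus_unimodular t)) _.
apply: ler_wpM2r; first exact: ltW.
by rewrite ler_nat (bigD1 j) //= leq_addr.
Qed.

Lemma cont_htorus fV fD (F : T -> C) : cont F -> cont (fun t => F (htorus fV fD t)).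
Proof.
move=> /cont_coord_cont contF; apply/cont_coord_cont => t eps eps_gt0.
have [d d_gt0 Hd] := contF (htorus fV fD t) eps eps_gt0.
pose M : R := (\sum_(k < n) size (regauge_walk src rv (fD @: tau) (fV r) (fD (e k))))%:R.
have M_ge0 : 0 <= M by rewrite ler0n.
have dM_gt0 : 0 < d / (M + 1) by rewrite divr_gt0 //; lra.
exists (d / (M + 1)) => // s /(htorus_lipschitz fV fD dM_gt0) st_near; apply: Hd => j.
apply: le_lt_trans (st_near j) _.
by rewrite -/M mulrA ltr_pdivrMr; [nra | lra].
Qed.

Lemma htorus_homeomorphism fV fD : is_aut src rv fV fD -> homeomorphism (htorus fV fD).
Proof.
move=> /htorus_inv[gV [gD [_ hK hK']]].
by exists (htorus gV gD); split=> // j; apply: cont_htorus (cont_coord j).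
Qed.

Definition psi fV fD (F : CT R n) : CT R n := exist _ _ (cont_htorus fV fD (svalP F)).

Lemma psi_comp fV fD gV gD F : is_aut src rv fV fD -> is_aut src rv gV gD ->
  psi (fV \o gV) (fD \o gD) F = psi fV fD (psi gV gD F).
Proof. by move=> fA gA; apply: CT_ext => t /=; rewrite htorus_comp. Qed.

Lemma psi_star_aut fV fD : is_aut src rv fV fD -> star_aut (psi fV fD).
Proof.
move=> /htorus_inv[gV [gD [_ hK hK']]]; split; last first.
  split=> [F F1 t | ]; first exact: F1.
  by split=> [F G H HFG t | a F G HF t | F G H HFG t | F G HF t]; apply: HFG || apply: HF.
by exists (psi gV gD) => F; apply: CT_ext => t /=; rewrite ?hK ?hK'.
Qed.

Lemma psi_wt fV fD f (F : CT R n) : is_aut src rv fV fD ->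
  (forall t, sval F t = wt rv tau e f (val t)) ->
  forall t, sval (psi fV fD F) t = wt' src rv tau e r fV fD (fD f) (val t).
Proof.
by move=> fA F_wt t; rewrite /= F_wt (wt_regauge rvK r tau_tree e_orient fA f (torus_unimodular t)).
Qed.

Lemma star_aut_psi_unique fV fD (chi : CT R n -> CT R n) : is_aut src rv fV fD ->
  star_aut chi ->
  (forall f (F : CT R n), (forall t, sval F t = wt rv tau e f (val t)) ->
    forall t, sval (chi F) t = wt' src rv tau e r fV fD (fD f) (val t)) ->
  forall F, chi F = psi fV fD F.
Proof.
move=> fA chi_aut chi_wt F; apply: CT_ext => t; apply: (star_aut_eval chi_aut) => j s.
by rewrite (chi_wt (e j)) /= ?ffunE // => s'; rewrite (wt_edge e_orient).
Qed.

End TorusAction.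

Theorem mainTheorem4 (R : realType) (V D : finType) (src : D -> V)
  (rev : D -> D) (Hgraph : is_graph rev) (Hconn : graph_connected src rev)
  (tau : {set D}) (Htree : spanning_tree src rev tau)
  (r : V) (u : 'I_#|V| -> V) (Hu : bijective u)
  (Hr : forall i : 'I_#|V|, val i = 0%N -> u i = r)
  (n : nat) (e : 'I_n -> D) (He : orientation rev tau e) :
  exists (psi : (V -> V) -> (D -> D) -> CT R n -> CT R n)
         (h : (V -> V) -> (D -> D) -> torus R n -> torus R n),
  [/\ (* psi_phi is a *-automorphism with the prescribed action on weights *)
      forall fV fD, is_aut src rev fV fD ->
        star_aut (psi fV fD) /\
        (forall (f : D) (F : CT R n),
           (forall t, sval F t = wt rev tau e f (val t)) ->
           forall t, sval (psi fV fD F) t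
                     = wt' src rev tau e r fV fD (fD f) (val t)),
      (* ... and it is the unique such *-automorphism *)
      forall fV fD, is_aut src rev fV fD ->
        forall chi : CT R n -> CT R n, star_aut chi ->
        (forall (f : D) (F : CT R n),
           (forall t, sval F t = wt rev tau e f (val t)) ->
           forall t, sval (chi F) t
                     = wt' src rev tau e r fV fD (fD f) (val t)) ->
        forall F, chi F = psi fV fD F,
      (* psi_phi(F) = F o h_phi with h_phi a homeomorphism of T^n *)
      forall fV fD, is_aut src rev fV fD ->
        homeomorphism (h fV fD) /\
        (forall F t, sval (psi fV fD F) t = sval F (h fV fD t)),
      (* phi |-> psi_phi is a group homomorphism *)
      forall fV fD gV gD, is_aut src rev fV fD -> is_aut src rev gV gD ->
        forall F, psi (fV \o gV) (fD \o gD) F = psi fV fD (psi gV gD F) &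
      (* at fixed points of h_phi, M_phi(t) commutes with H_tau(t) *)
      forall fV fD, is_aut src rev fV fD ->
        forall t : torus R n, h fV fD t = t ->
          Mphi src rev tau e u r fV fD (val t) *m Ham src rev tau e u (val t)
          = Ham src rev tau e u (val t) *m Mphi src rev tau e u r fV fD (val t)].
Proof.
case: Hgraph => rvK _.
exists (psi src rev tau e r), (htorus src rev tau e r); split.
- move=> fV fD fA; split; first exact: psi_star_aut.
  by move=> f F; apply: psi_wt.
- by move=> fV fD fA chi; apply: star_aut_psi_unique.
- by move=> fV fD fA; split; [exact: htorus_homeomorphism |].
- by move=> fV fD gV gD fA gA F; apply: psi_comp.
- move=> fV fD fA t t_fix.
  apply: (Mphi_Ham_comm rvK Htree He Hu fA (torus_unimodular t)).
  by rewrite -[RHS](congr1 val t_fix).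
Qed.
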